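(* Let $S=k[x_{1,0},\ldots,x_{1,n_1},\ldots,x_{m,0},\ldots,x_{m,n_m}]$, $T=k[X_{1,0},\ldots,X_{1,n_1},\ldots,X_{m,0},\ldots,X_{m,n_m}]$, and for $i=1,\ldots,m$ let $S^{[i]}=k[x_{i,0},\ldots,x_{i,n_i}]$, $T^{[i]}=k[X_{i,0},\ldots,X_{i,n_i}]$, $F_i\in S^{[i]}_d$ and $F=F_1+\cdots+F_m\in S_d$. For each $i$ let $I^{[i]}\subsetneq T^{[i]}$ be a proper homogeneous ideal and $t_i\in I^{[i]}$ homogeneous, all $t_i$ of the same degree. Regarding each $F_i$ as a form in $S$ (so $F_i^\perp=\{g\in T: g\circ F_i=0\}$) and each $I^{[i]}$ as generating an ideal of $T$, set $J_i=(F_i^\perp : I^{[i]})+(t_i)\subset T$. Then for all $a_1,\ldots,a_m\in k$, \[(F^\perp : (I^{[1]}+ \cdots+ I^{[m]}) )+(a_1t_1+ \cdots+ a_mt_m) \subseteq J_1 \cap \cdots \cap J_m .\]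
   Context: $k$ is algebraically closed of characteristic zero; $T$ acts on $S$ by differentiation ($X_{i,j}\circ F=\partial F/\partial x_{i,j}$), and $F^\perp=\{g\in T: g\circ F=0\}$. *)

From HB Require Import structures.
From mathcomp Require Import all_boot all_order all_algebra.
From mathcomp Require Import mpoly.
Set Implicit Arguments. Unset Strict Implicit. Unset Printing Implicit Defensive.
Import GRing.Theory.
Local Open Scope ring_scope.

(* All variables x_{i,j} (resp. X_{i,j}) are numbered 0..N-1; the block
   (index i in 1..m, here 'I_m) of a variable is given by blk : 'I_N -> 'I_m.
   S and T are both modelled by {mpoly k[N]}. *)

Definition diff_act (k : fieldType) (N : nat) (g F : {mpoly k[N]}) : {mpoly k[N]} :=
  \sum_(mo <- msupp g) g@_mo *: (mderivm mo F).

Definition perp (k : fieldType) (N : nat) (F : {mpoly k[N]}) : {mpoly k[N]} -> Prop :=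
  fun g => diff_act g F = 0.

Definition homogeneous (k : fieldType) (N : nat) (d : nat) (p : {mpoly k[N]}) : Prop :=
  forall mo, mo \in msupp p -> mdeg mo = d.

Definition is_homog (k : fieldType) (N : nat) (p : {mpoly k[N]}) : Prop :=
  exists d, homogeneous d p.

Definition hcomp (k : fieldType) (N : nat) (d : nat) (p : {mpoly k[N]}) : {mpoly k[N]} :=
  \sum_(mo <- msupp p | mdeg mo == d) p@_mo *: 'X_[mo].

(* p only involves the variables of block i, i.e. p lies in S^[i] (or T^[i]) *)
Definition in_block (k : fieldType) (N m : nat) (blk : 'I_N -> 'I_m) (i : 'I_m)
  (p : {mpoly k[N]}) : Prop :=
  forall mo, mo \in msupp p -> forall j, blk j != i -> mo j = 0%N.

(* I is an ideal of the subring T^[i] *)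
Definition is_block_ideal (k : fieldType) (N m : nat) (blk : 'I_N -> 'I_m) (i : 'I_m)
  (I : {mpoly k[N]} -> Prop) : Prop :=
  [/\ forall p, I p -> in_block blk i p,
      I 0,
      forall p q, I p -> I q -> I (p + q)
    & forall h p, in_block blk i h -> I p -> I (h * p)].

Definition homog_ideal (k : fieldType) (N : nat) (I : {mpoly k[N]} -> Prop) : Prop :=
  forall p d, I p -> I (hcomp d p).

Definition is_proper_ideal (k : fieldType) (N : nat) (I : {mpoly k[N]} -> Prop) : Prop :=
  ~ I 1.

Definition gen_ideal (k : fieldType) (N : nat) (P : {mpoly k[N]} -> Prop) :
  {mpoly k[N]} -> Prop :=
  fun x => exists s : seq ({mpoly k[N]} * {mpoly k[N]}),
    (forall hu, hu \in s -> P hu.2) /\ x = \sum_(hu <- s) hu.1 * hu.2.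

Definition colon (k : fieldType) (N : nat) (A B : {mpoly k[N]} -> Prop) :
  {mpoly k[N]} -> Prop :=
  fun g => forall b, B b -> A (g * b).

Definition ideal_add (k : fieldType) (N : nat) (A B : {mpoly k[N]} -> Prop) :
  {mpoly k[N]} -> Prop :=
  fun x => exists a b, [/\ A a, B b & x = a + b].

Definition principal (k : fieldType) (N : nat) (t : {mpoly k[N]}) : {mpoly k[N]} -> Prop :=
  fun x => exists h, x = h * t.


From HB Require Import structures.
From mathcomp Require Import all_boot all_order all_algebra.
From mathcomp Require Import mpoly ssrcomplements.
Set Implicit Arguments. Unset Strict Implicit. Unset Printing Implicit Defensive.
Import GRing.Theory.
Local Open Scope ring_scope.

(* A proper homogeneous ideal of T^[i] lies in the irrelevant ideal
   (X_{i,0}, ..., X_{i,n_i}), and an element of that ideal kills every form in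
   the variables of another block.  So for b in I^[i] T and c in
   (F^perp : I), c b kills F and every F_j with j <> i, hence also F_i; and
   h t_j b kills F_i for j <> i.  Thus
   g = c + h (a_1 t_1 + ... + a_m t_m)
     = (c + h sum_(j <> i) a_j t_j) + (a_i h) t_i  lies in J_i. *)

Section DiffAct.
Variables (k : fieldType) (N : nat).
Implicit Types (g F w : {mpoly k[N]}).

Lemma diff_act_msizeE g F K : (msize g <= K)%N ->
  diff_act g F = \sum_(mo : 'X_{1..N < K}) g@_mo *: mderivm mo F.
Proof.
move=> le_gK; rewrite /diff_act (big_mksub 'X_{1..N < K}) /=; first last.
- by move=> mo /msize_mdeg_lt/leq_trans/(_ le_gK).
- exact: msupp_uniq.
by rewrite big_rmcond //= => mo /memN_msupp_eq0 ->; rewrite scale0r.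
Qed.

Lemma diff_actD g1 g2 F : diff_act (g1 + g2) F = diff_act g1 F + diff_act g2 F.
Proof.
set K := (msize g1 + msize g2)%N.
have le_g1K : (msize g1 <= K)%N by rewrite leq_addr.
have le_g2K : (msize g2 <= K)%N by rewrite leq_addl.
have le_gK : (msize (g1 + g2) <= K)%N.
  by rewrite (leq_trans (msizeD_le _ _)) // geq_max le_g1K.
rewrite !(diff_act_msizeE F le_gK, diff_act_msizeE F le_g1K, diff_act_msizeE F le_g2K).
by rewrite -big_split; apply: eq_bigr => mo _; rewrite mcoeffD scalerDl.
Qed.

Lemma diff_act0 F : diff_act 0 F = 0.
Proof. by rewrite /diff_act msupp0 big_nil. Qed.

Lemma diff_act_suml (I : Type) (r : seq I) (P : pred I) (G : I -> {mpoly k[N]}) F :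
  diff_act (\sum_(x <- r | P x) G x) F = \sum_(x <- r | P x) diff_act (G x) F.
Proof.
by rewrite (big_morph (fun g => diff_act g F)
  (fun g1 g2 => diff_actD g1 g2 F) (diff_act0 F)).
Qed.

Lemma diff_act_sumr (I : finType) (P : pred I) g (G : I -> {mpoly k[N]}) :
  diff_act g (\sum_(x | P x) G x) = \sum_(x | P x) diff_act g (G x).
Proof.
rewrite /diff_act; under eq_bigr do rewrite raddf_sum /= scaler_sumr.
exact: exchange_big.
Qed.

Lemma mderivm_eq0 (mo : 'X_{1..N}) F l :
  (0 < mo l)%N -> (forall mo', mo' \in msupp F -> mo' l = 0%N) -> mderivm mo F = 0.
Proof.
move=> mo_l F_l; rewrite mderivmE big1_seq // => mo' /andP[_ /F_l mo'_l].
rewrite (bigD1 l) //= mo'_l ffact0n.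
by rewrite eqn0Ngt mo_l mul0n mulr0 scale0r.
Qed.

Variables (m : nat) (blk : 'I_N -> 'I_m).

(* Membership in the irrelevant ideal of T^[i], extended to T: every monomial
   has a positive exponent on some variable of block i. *)
Definition in_irrelevant (i : 'I_m) w :=
  forall mo, mo \in msupp w -> exists2 l, blk l = i & (0 < mo l)%N.

Lemma in_irrelevant0 i : in_irrelevant i 0.
Proof. by move=> mo; rewrite msupp0. Qed.

Lemma in_irrelevantD i w1 w2 :
  in_irrelevant i w1 -> in_irrelevant i w2 -> in_irrelevant i (w1 + w2).
Proof. by move=> w1i w2i mo /msuppD_le; rewrite mem_cat => /orP[/w1i|/w2i]. Qed.

Lemma in_irrelevantZ i c w : in_irrelevant i w -> in_irrelevant i (c *: w).
Proof. by move=> wi mo /msuppZ_le /wi. Qed.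

Lemma in_irrelevantMl i p w : in_irrelevant i w -> in_irrelevant i (p * w).
Proof.
move=> wi mo /msuppM_le /allpairsP[[m1 m2] /= [_ /wi[l blk_l m2_l] ->]].
by exists l; rewrite // mnmDE (leq_trans m2_l) ?leq_addl.
Qed.

Lemma in_irrelevantMr i w p : in_irrelevant i w -> in_irrelevant i (w * p).
Proof. by rewrite mulrC; apply: in_irrelevantMl. Qed.

Lemma gen_ideal_irrelevant i (P : {mpoly k[N]} -> Prop) :
  (forall u, P u -> in_irrelevant i u) ->
  forall w, gen_ideal P w -> in_irrelevant i w.
Proof.
move=> Pi w [s [Ps ->]]; rewrite big_seq.
apply: big_ind => [|w1 w2|hu /Ps /Pi]; [exact: in_irrelevant0|exact: in_irrelevantD|].
exact: in_irrelevantMl.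
Qed.

Lemma diff_act_irrelevant_block i j w F :
  in_irrelevant i w -> in_block blk j F -> j != i -> diff_act w F = 0.
Proof.
move=> wi Fj ji; rewrite /diff_act big1_seq // => mo /andP[_ /wi[l blk_l mo_l]].
rewrite (@mderivm_eq0 mo F l mo_l) ?scaler0 // => mo' /Fj; apply.
by rewrite blk_l eq_sym.
Qed.

Lemma diff_act_irrelevant_sum i w (F : 'I_m -> {mpoly k[N]}) :
  in_irrelevant i w -> (forall j, in_block blk j (F j)) ->
  diff_act w (\sum_j F j) = diff_act w (F i).
Proof.
move=> wi Fblk; rewrite diff_act_sumr (bigD1 i) //= big1 ?addr0 // => j ji.
exact: diff_act_irrelevant_block wi (Fblk j) ji.
Qed.

Lemma hcomp0E w : hcomp 0 w = (w@_0%MM)%:MP.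
Proof.
rewrite /hcomp big_mkcond /=.
have [w0|w0] := boolP (0%MM \in msupp w).
  rewrite (bigD1_seq _ w0 (msupp_uniq w)) /= mdeg0 eqxx mpolyX0 alg_mpolyC.
  rewrite big1 ?addr0 // => mo mo0; case: ifP => // /eqP/eqP.
  by rewrite mdeg_eq0 (negbTE mo0).
rewrite (memN_msupp_eq0 w0) raddf0; apply: big1_seq => mo /andP[_ w_mo].
by rewrite mdeg_eq0; case: eqP w_mo => // -> /(negP w0).
Qed.

Lemma block_ideal_irrelevant i (I : {mpoly k[N]} -> Prop) :
  is_block_ideal blk i I -> homog_ideal I -> is_proper_ideal I ->
  forall w, I w -> in_irrelevant i w.
Proof.
move=> [Iblk _ _ IM] Ihomog Iproper w Iw.
have w0 : w@_0%MM = 0.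
  apply/eqP; apply: contraPT Iproper => w0_neq0; apply.
  have -> : 1 = (w@_0%MM)^-1%:MP * (w@_0%MM)%:MP :> {mpoly k[N]}.
    by rewrite -mpolyCM mulVf.
  rewrite -hcomp0E; apply: IM; last exact: Ihomog.
  move=> mo; rewrite msuppC; case: eqP => // _.
  by rewrite mem_seq1 => /eqP-> l _; rewrite mnm0E.
move=> mo w_mo; have : mo != 0%MM.
  by apply: contraTneq w_mo => ->; rewrite mcoeff_msupp w0 eqxx.
rewrite -mdeg_eq0 mdegE sum_nat_eq0 => /forallPn[l /= mo_l].
exists l; last by rewrite lt0n.
by apply: contraNeq mo_l => /(Iblk _ Iw _ w_mo) ->.
Qed.

End DiffAct.

Lemma gen_ideal_sub (k : fieldType) (N : nat) (P P' : {mpoly k[N]} -> Prop) :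
  (forall u, P u -> P' u) -> forall w, gen_ideal P w -> gen_ideal P' w.
Proof. by move=> PP' w [s [Ps ->]]; exists s; split => // hu /Ps /PP'. Qed.

Theorem lemma5p2 (k : closedFieldType) (hchar : [pchar k] =i pred0)
  (N m : nat) (blk : 'I_N -> 'I_m) (blk_surj : forall i : 'I_m, exists j, blk j = i)
  (d e : nat) (F : 'I_m -> {mpoly k[N]})
  (hF : forall i, in_block blk i (F i) /\ homogeneous d (F i))
  (I : 'I_m -> {mpoly k[N]} -> Prop)
  (hIideal : forall i, is_block_ideal blk i (I i))
  (hIhomog : forall i, homog_ideal (I i))
  (hIproper : forall i, is_proper_ideal (I i))
  (t : 'I_m -> {mpoly k[N]})
  (ht : forall i, I i (t i) /\ homogeneous e (t i))
  (a : 'I_m -> k) :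
  let Ftot := \sum_(i < m) F i in
  let J := fun i : 'I_m =>
    ideal_add (colon (perp (F i)) (gen_ideal (I i))) (principal (t i)) in
  forall g,
    ideal_add (colon (perp Ftot) (gen_ideal (fun u => exists i, I i u)))
              (principal (\sum_(i < m) a i *: t i)) g ->
    forall i, J i g.
Proof.
move=> Ftot J g [c [_ [Fc [h ->] ->]]] i.
have Fblk j : in_block blk j (F j) := (hF j).1.
have Iirr j : forall u, I j u -> in_irrelevant blk j u :=
  block_ideal_irrelevant (hIideal j) (hIhomog j) (hIproper j).
set S := \sum_(j < m | j != i) a j *: t j.
have decomp : c + h * \sum_(j < m) a j *: t j = c + h * S + a i *: h * t i.
  by rewrite (bigD1 i) //= -/S mulrDr -scalerAl -scalerAr [_ + h * S]addrC addrA.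
exists (c + h * S), (a i *: h * t i); split=> //; last by exists (a i *: h).
move=> b Ib; have bi := gen_ideal_irrelevant (Iirr i) Ib.
rewrite /perp mulrDl diff_actD.
have -> : diff_act (c * b) (F i) = 0.
  have cbi : in_irrelevant blk i (c * b) := in_irrelevantMl bi.
  rewrite -(diff_act_irrelevant_sum cbi Fblk).
  by apply: Fc; apply: gen_ideal_sub Ib => u Iu; exists i.
rewrite add0r /S mulr_sumr mulr_suml diff_act_suml big1 // => j ji.
have tj : in_irrelevant blk j (h * (a j *: t j) * b).
  exact/in_irrelevantMr/in_irrelevantMl/in_irrelevantZ/Iirr/(ht j).1.
by apply: diff_act_irrelevant_block tj (Fblk i) _; rewrite eq_sym.
Qed.
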